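(* Let $\mathcal G$ be the $\mathbb Z$-periodic graph obtained from the one-dimensional lattice $\mathbb Z$ by attaching a pendant edge at each vertex, and let $H=A+Q$ with a $\mathbb Z$-periodic potential $Q$. Its fundamental graph has two vertices $v_1$ (degree 3) and $v_2$ (degree 1); write $q_s=Q(v_s)$. Then (a) $\mathcal I_1^0(Q)=q_1+q_2$, $\mathcal I_2^0(Q)=\frac12(q_1^2+q_2^2)$, $\mathcal I_2^{1}(Q)=\mathcal I_2^{-1}(Q)=q_1$ form a complete system of Floquet spectral invariants of $H$; (b) $\mathcal I_1(Q)=q_1+q_2$, $\mathcal I_2(Q)=\frac12(q_1^2+q_2^2)+2q_1$ form a complete system of periodic spectral invariants of $H$; (c) if a (complex-valued) potential $P$ has the same periodic spectrum as $Q$ (i.e. $\sigma(A(0)+P)=\sigma(A(0)+Q)$), then $P=(q_1,q_2)$ or $P=(q_2-2,q_1+2)$; in particular if $Q=0$ then $P=0$ or $P=(-2,2)$, and if $Q=-\varkappa=(-3,-1)$ then $P=-\varkappa$.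
   Context: The fundamental graph $\mathcal G_*$ consists of vertices $v_1,v_2$, a loop $\mathbf e_1$ at $v_1$ with edge index $1$, and an edge $\mathbf e_2$ between $v_1$ and $v_2$ with index $0$ (each taken with both orientations; inverse edge has negated index). Floquet operators: $H(k)=A(k)+Q$ on $\mathbb C^2$, $(A(k)f)(v)=\sum_{\mathbf e=(v,u)}e^{ik\tau(\mathbf e)}f(u)$, $k\in\mathbb R/2\pi\mathbb Z$; Floquet spectrum $\{\sigma(H(k))\}_k$, periodic spectrum $\sigma(H(0))$. A functional is a Floquet (periodic) spectral invariant if it takes equal values on potentials with equal Floquet (periodic) spectra; a family is complete if its equality is equivalent to equality of the spectra. Cycles: closed paths of oriented edges up to cyclic permutation; prime if not an $r$-fold repetition with $r\ge2$; length $|\mathbf c|$, index $\tau(\mathbf c)$ = sum of edge indices. Modified graph $\widetilde{\mathcal G}_*$: add a loop $\mathbf e_v$ of index $0$ at each vertex; weight $\omega(\mathbf c,Q)$ = product of $Q(v)$ over added loops $\mathbf e_v$ traversed (other edges weight 1). $\mathcal P,\widetilde{\mathcal P}$: prime cycles in $\mathcal G_*,\widetilde{\mathcal G}_*$. $\mathcal I_n^{\mathrm m}(Q)=\sum\frac1r\omega^r(\mathbf c,Q)$ over $r\in\{1,\dots,n\}$, $\mathbf c\in\widetilde{\mathcal P}\setminus\mathcal P$, $r|\mathbf c|=n$, $r\tau(\mathbf c)=\mathrm m$; $\mathcal I_n(Q)$ the same without index condition. *)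

From HB Require Import structures.
From mathcomp Require Import all_boot all_order all_algebra.
From mathcomp Require Import all_classical all_reals all_analysis.
From mathcomp Require Import complex.
Set Implicit Arguments. Unset Strict Implicit. Unset Printing Implicit Defensive.
Import Order.TTheory GRing.Theory Num.Theory.
Local Open Scope ring_scope.

Definition vertex := 'I_2.
Definition v1 : vertex := ord0.
Definition v2 : vertex := ord_max.

(* Oriented edges of the modified graph:
   E1  : loop e1 at v1, index 1;  E1b : its inverse, index -1;
   E2  : edge e2 from v1 to v2, index 0;  E2b : its inverse v2 -> v1, index 0;
   Ev1 : added loop e_{v1} at v1, index 0;  Ev2 : added loop e_{v2}, index 0. *)
Inductive edge := E1 | E1b | E2 | E2b | Ev1 | Ev2.

Definition edge_enc (e : edge) : 'I_6 :=
  match e with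
  | E1 => inord 0 | E1b => inord 1 | E2 => inord 2
  | E2b => inord 3 | Ev1 => inord 4 | Ev2 => inord 5 end.
Definition edge_dec (i : 'I_6) : option edge :=
  match val i with
  | 0 => Some E1 | 1 => Some E1b | 2 => Some E2
  | 3 => Some E2b | 4 => Some Ev1 | 5 => Some Ev2 | _ => None end.
Lemma edge_encK : pcancel edge_enc edge_dec.
Proof. by case; rewrite /edge_dec /= inordK. Qed.
HB.instance Definition _ := Finite.copy edge (pcan_type edge_encK).

Definition src (e : edge) : vertex :=
  match e with E1 | E1b | E2 | Ev1 => v1 | E2b | Ev2 => v2 end.
Definition tgt (e : edge) : vertex :=
  match e with E1 | E1b | E2b | Ev1 => v1 | E2 | Ev2 => v2 end.

Definition tau (e : edge) : int :=
  match e with E1 => 1 | E1b => -1 | _ => 0 end.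

Definition orig (e : edge) : bool :=
  match e with Ev1 | Ev2 => false | _ => true end.

Section Complex.
Variable R : realType.
Local Notation C := R[i].
Local Open Scope complex_scope.

Definition expi (t : R) : C := Complex (cos t) (sin t).

Definition potential := vertex -> C.

Definition Afl (k : R) : 'M[C]_2 :=
  \matrix_(v, u) \sum_(e : edge | orig e && (src e == v) && (tgt e == u))
                   expi (k * (tau e)%:~R).

Definition Hfl (Q : potential) (k : R) : 'M[C]_2 :=
  Afl k + diag_mx (\row_v Q v).

Definition spec (M : 'M[C]_2) : pred C := eigenvalue M.

Definition same_floquet_spectrum (P Q : potential) : Prop :=
  forall k : R, spec (Hfl P k) =1 spec (Hfl Q k).

Definition same_periodic_spectrum (P Q : potential) : Prop :=
  spec (Hfl P 0) =1 spec (Hfl Q 0).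

Definition eweight (Q : potential) (e : edge) : C :=
  match e with Ev1 => Q v1 | Ev2 => Q v2 | _ => 1 end.
Definition pweight (Q : potential) (s : seq edge) : C :=
  \prod_(e <- s) eweight Q e.
End Complex.

Definition pindex (s : seq edge) : int := \sum_(e <- s) tau e.

Definition closedp (s : seq edge) : bool :=
  (0 < size s)%N && cycle (fun e f => tgt e == src f) s.

(* prime: not an r-fold repetition q^r with r >= 2 (if s = q^r then
   necessarily q = take (size s %/ r) s) *)
Definition primep (s : seq edge) : bool :=
  [forall r : 'I_(size s).+1,
     ((2 <= r)%N && (r %| size s)%N) ==>
       (s != flatten (nseq r (take (size s %/ r) s)))].

Definition cyc (L : nat) (p : L.-tuple edge) : {set L.-tuple edge} :=
  [set [tuple of rot i p] | i : 'I_L].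

Definition cycles (L : nat) : {set {set L.-tuple edge}} :=
  [set cyc p | p : L.-tuple edge & closedp p].

Definition crep (L : nat) (c : {set L.-tuple edge}) : seq edge :=
  if [pick p in c] is Some p then val p else [::].

(* prime cycles of the modified graph that are not cycles of G_*
   (i.e. traverse at least one added loop) *)
Definition newprime (L : nat) (c : {set L.-tuple edge}) : bool :=
  primep (crep c) && ~~ all orig (crep c).

Definition Inm (R : realType) (n : nat) (m : int) (Q : potential R) : R[i] :=
  \sum_(1 <= r < n.+1) \sum_(1 <= L < n.+1 | (r * L)%N == n)
    \sum_(c in cycles L | newprime c && ((r%:Z * pindex (crep c))%R == m))
      (r%:R)^-1 * (pweight Q (crep c)) ^+ r.

Definition In (R : realType) (n : nat) (Q : potential R) : R[i] :=
  \sum_(1 <= r < n.+1) \sum_(1 <= L < n.+1 | (r * L)%N == n)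
    \sum_(c in cycles L | newprime c)
      (r%:R)^-1 * (pweight Q (crep c)) ^+ r.

(* The Floquet operator of the fundamental graph is H(k) = [[2 cos k + q1, 1], [1, q2]],
   so sigma(H(k)) is the zero set of x^2 - (2 cos k + q1 + q2) x + (2 cos k + q1) q2 - 1.
   Over the algebraically closed field C a monic quadratic is determined by its zero set,
   so equal periodic spectra means equal q1 + q2 and (2 + q1) q2, and comparing also at
   k = pi/2 forces P = Q.  On the combinatorial side, the only prime cycles of length at
   most 2 through an added loop are e_v1, e_v2, e_v1 e1 and e_v1 e1^-1, which gives the
   invariants in closed form; I_1 and I_2 recover exactly q1 + q2 and (2 + q1) q2, and
   the quadratic these leave for q1 has the two roots listed in (c). *)

From HB Require Import structures.
From mathcomp Require Import all_boot all_order all_algebra.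
From mathcomp Require Import all_classical all_reals all_analysis.
From mathcomp Require Import complex.
From mathcomp Require Import ring.
Set Implicit Arguments. Unset Strict Implicit. Unset Printing Implicit Defensive.
Import Order.TTheory GRing.Theory Num.Theory.
Local Open Scope ring_scope.

Lemma det_mx2 (R : comPzRingType) (A : 'M[R]_2) :
  \det A = A ord0 ord0 * A ord_max ord_max - A ord0 ord_max * A ord_max ord0.
Proof.
rewrite (expand_det_row _ ord0) !big_ord_recl big_ord0 /cofactor !det_mx11 !mxE /=.
have -> : lift ord0 (0 : 'I_1) = ord_max :> 'I_2 by apply/val_inj.
have -> : lift (ord_max : 'I_2) (0 : 'I_1) = ord0 :> 'I_2 by apply/val_inj.
rewrite /= expr0 expr1; ring.
Qed.

Lemma eigenvalue_det (F : fieldType) n (A : 'M[F]_n) a :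
  eigenvalue A a = (\det (A - a%:M) == 0).
Proof.
by rewrite /eigenvalue /eigenspace kermx_eq0 row_free_unit unitmxE unitfE negbK.
Qed.

Lemma monic_quadratic_split (F : closedFieldType) (t d : F) :
  exists a b, t = a + b /\ d = a * b.
Proof.
have [a ha] := @solve_monicpoly F 2 (nth 0 [:: - d; t]) isT.
exists a, (t - a); split; first by ring.
move: ha; rewrite !big_ord_recl big_ord0 /= => ha.
have -> : d = t * a - a ^+ 2 by rewrite ha; ring.
ring.
Qed.

Lemma same_zeros_factored_quadratic (F : idomainType) (a b c e : F) :
  (forall x, ((x - a) * (x - b) == 0) = ((x - c) * (x - e) == 0)) ->
  a + b = c + e /\ a * b = c * e.
Proof.
have root_eq (u v w : F) : (u - v) * (u - w) == 0 -> u = v \/ u = w.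
  by rewrite mulf_eq0 !subr_eq0 => /orP[]/eqP; [left | right].
move=> zeros.
have [a_ce b_ce] : (a = c \/ a = e) /\ (b = c \/ b = e).
  by split; apply: root_eq; rewrite -zeros subrr ?mul0r ?mulr0.
have [c_ab e_ab] : (c = a \/ c = b) /\ (e = a \/ e = b).
  by split; apply: root_eq; rewrite zeros subrr ?mul0r ?mulr0.
by case: a_ce b_ce c_ab e_ab => -> [] -> [] ? [] ?; subst; split; ring.
Qed.

Lemma same_zeros_monic_quadratic (F : closedFieldType) (t d t' d' : F) :
  (forall x, (x ^+ 2 - t * x + d == 0) = (x ^+ 2 - t' * x + d' == 0)) <->
  t = t' /\ d = d'.
Proof.
split=> [|[-> ->] //].
have [a [b [-> ->]]] := monic_quadratic_split t d.
have [c [e [-> ->]]] := monic_quadratic_split t' d'.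
move=> zeros.
apply: same_zeros_factored_quadratic => x.
have expand u v : (x - u) * (x - v) = x ^+ 2 - (u + v) * x + u * v by ring.
by rewrite !expand zeros.
Qed.

(* Equality on [edge] is transported from 'I_6 through [inord] and does not reduce
   by computation; comparing codes in nat does. *)
Definition edge_nat (e : edge) : nat :=
  match e with E1 => 0 | E1b => 1 | E2 => 2 | E2b => 3 | Ev1 => 4 | Ev2 => 5 end.

Lemma edge_eqE (e f : edge) : (e == f) = (edge_nat e == edge_nat f).
Proof. by case: e; case: f; rewrite ?eqxx //; apply/eqP. Qed.

Section FloquetOperator.
Variable R : realType.
Implicit Types (P Q : potential R) (k : R).

Lemma Afl_v1v1 k : Afl k v1 v1 = (cos k *+ 2)%:C%C.
Proof.
rewrite mxE (bigD1 E1) // (bigD1 E1b) ?edge_eqE // big1 => [|[]]; rewrite ?eqxx ?andbF //=.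
rewrite /expi mulr1 mulrN1 cosN sinN addr0.
by apply/eqP; rewrite eq_complex /= mulr2n subrr !eqxx.
Qed.

Lemma Afl_v1v2 k : Afl k v1 v2 = 1.
Proof.
rewrite mxE (bigD1 E2) // big1 => [|[]]; rewrite ?eqxx ?andbF //=.
by rewrite /expi mulr0 cos0 sin0 addr0.
Qed.

Lemma Afl_v2v1 k : Afl k v2 v1 = 1.
Proof.
rewrite mxE (bigD1 E2b) // big1 => [|[]]; rewrite ?eqxx ?andbF //=.
by rewrite /expi mulr0 cos0 sin0 addr0.
Qed.

Lemma Afl_v2v2 k : Afl k v2 v2 = 0.
Proof. by rewrite mxE big1 => [|[]]. Qed.

Lemma Afl0_v1v1 : Afl (0 : R) v1 v1 = 2.
Proof. by rewrite Afl_v1v1 cos0; apply/eqP; rewrite eq_complex /= addr0 -mulr2n !eqxx. Qed.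

Lemma Afl_pihalf_v1v1 : Afl (pi / 2 : R) v1 v1 = 0.
Proof. by rewrite Afl_v1v1 cos_pihalf; apply/eqP; rewrite eq_complex /= mul0rn !eqxx. Qed.

Lemma spec_Hfl P k x : spec (Hfl P k) x =
  (x ^+ 2 - (Afl k v1 v1 + P v1 + P v2) * x + ((Afl k v1 v1 + P v1) * P v2 - 1) == 0).
Proof.
rewrite /spec eigenvalue_det det_mx2 /Hfl.
move: (Afl_v1v2 k) (Afl_v2v1 k) (Afl_v2v2 k); move: (Afl k) => A A12 A21 A22.
rewrite !mxE -[ord0]/v1 -[ord_max]/v2 A12 A21 A22 /=.
by congr (_ == 0); ring.
Qed.

Lemma same_spec_Hfl P Q k :
  spec (Hfl P k) =1 spec (Hfl Q k) <->
  P v1 + P v2 = Q v1 + Q v2 /\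
  (Afl k v1 v1 + P v1) * P v2 = (Afl k v1 v1 + Q v1) * Q v2.
Proof.
set a := Afl k v1 v1.
split=> [same_spec | [sum_eq prod_eq] x]; last first.
  by rewrite !spec_Hfl -!addrA sum_eq prod_eq.
have /same_zeros_monic_quadratic[sum_eq prod_eq] :
    forall x, (x ^+ 2 - (a + P v1 + P v2) * x + ((a + P v1) * P v2 - 1) == 0) =
              (x ^+ 2 - (a + Q v1 + Q v2) * x + ((a + Q v1) * Q v2 - 1) == 0).
  by move=> x; rewrite -!spec_Hfl same_spec.
by split; [apply: (addrI a); rewrite !addrA | apply: (addIr (-1))].
Qed.

Lemma same_floquet_spectrumE P Q :
  same_floquet_spectrum P Q <-> P v1 = Q v1 /\ P v2 = Q v2.
Proof.
split=> [same | [eq1 eq2] k]; last by apply/same_spec_Hfl; rewrite eq1 eq2.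
have /same_spec_Hfl[sum0 prod0] := same 0.
have /same_spec_Hfl[sum1 prod1] := same (pi / 2).
move: sum0 prod0 prod1; rewrite Afl0_v1v1 Afl_pihalf_v1v1 !add0r => sum0 prod0 prod1.
have eq2 : P v2 = Q v2.
  have two_neq0 : (2 : R[i]) != 0 by rewrite pnatr_eq0.
  apply: (mulfI two_neq0).
  have -> : 2 * P v2 = (2 + P v1) * P v2 - P v1 * P v2 by ring.
  by rewrite prod0 prod1; ring.
by split=> //; apply: (addIr (P v2)); rewrite {2}eq2.
Qed.

Lemma same_periodic_spectrumE P Q :
  same_periodic_spectrum P Q <->
  P v1 + P v2 = Q v1 + Q v2 /\ (2 + P v1) * P v2 = (2 + Q v1) * Q v2.
Proof. by rewrite -Afl0_v1v1; apply: same_spec_Hfl. Qed.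
End FloquetOperator.

Lemma perm_crep_cyc L (p : L.-tuple edge) : perm_eq (crep (cyc p)) p.
Proof.
rewrite /crep; case: pickP => [q /imsetP[i _ ->] | no_rot]; first by rewrite /= perm_rot.
case: L p no_rot => [|L] p no_rot; first by rewrite tuple0.
have : p \in cyc p by apply/imsetP; exists ord0 => //; apply/val_inj; rewrite /= rot0.
by rewrite no_rot.
Qed.

Lemma pindex_crep L (p : L.-tuple edge) : pindex (crep (cyc p)) = pindex p.
Proof. exact: perm_big (perm_crep_cyc p). Qed.

Lemma pweight_crep (R : realType) (Q : potential R) L (p : L.-tuple edge) :
  pweight Q (crep (cyc p)) = pweight Q p.
Proof. exact: perm_big (perm_crep_cyc p). Qed.

Lemma primep_small s : (size s <= 2)%N -> primep s = uniq s.
Proof.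
rewrite /primep; case: s => [|a [|b [|//]]] _ /=; try by apply/forallP => -[[|[|]]].
rewrite andbT mem_seq1 eq_sym; apply/idP/idP => [/forallP/(_ (inord 2)) | neq_ba].
  by rewrite inordK //= !eqseq_cons eqxx andbT.
by apply/forallP => -[[|[|[|]]] //= _]; rewrite !eqseq_cons eqxx andbT.
Qed.

Lemma newprime_cyc L (p : L.-tuple edge) :
  (L <= 2)%N -> newprime (cyc p) = uniq p && ~~ all orig p.
Proof.
move=> small_L; have perm_p := perm_crep_cyc p.
rewrite /newprime primep_small ?(perm_size perm_p) ?size_tuple //.
by rewrite (perm_uniq perm_p) (perm_all _ perm_p).
Qed.

Lemma cyc1 (p : 1.-tuple edge) : cyc p = [set p].
Proof.
apply/setP => q; rewrite inE; apply/imsetP/eqP => [[i _ ->]|->].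
  by apply/val_inj; rewrite /= ord1 rot0.
by exists ord0 => //; apply/val_inj; rewrite /= rot0.
Qed.

Lemma cyc2 (p : 2.-tuple edge) : cyc p = [set p; [tuple of rot 1 p]].
Proof.
apply/setP => q; rewrite !inE.
apply/imsetP/orP => [[[[|[|]] //= _] _ ->] | [/eqP-> | /eqP->]].
- by left; apply/eqP/val_inj; rewrite /= rot0.
- by right; apply/eqP/val_inj.
- by exists ord0 => //; apply/val_inj; rewrite /= rot0.
- by exists (inord 1) => //; apply/val_inj; rewrite /= inordK.
Qed.

Lemma cyc_swap a b : cyc [tuple a; b] = cyc [tuple b; a].
Proof. by rewrite !cyc2 finset.setUC; congr ([set _] :|: [set _]); apply/val_inj. Qed.

Lemma newprime_cycles1 :
  [set c in cycles 1 | newprime c] = [set cyc [tuple Ev1]; cyc [tuple Ev2]].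
Proof.
apply/setP => c; rewrite !inE; apply/andP/orP => [[/imsetP[p]] | ].
  rewrite inE => closed_p ->; rewrite newprime_cyc //.
  case/tupleP: p closed_p => a p; rewrite tuple0.
  case: a => //= _ _; [left | right]; apply/eqP; congr cyc; exact/val_inj.
by case=> /eqP ->; rewrite newprime_cyc //; split => //; apply/imsetP;
  [exists [tuple Ev1] | exists [tuple Ev2]]; rewrite ?inE.
Qed.

Lemma newprime_cycles2 :
  [set c in cycles 2 | newprime c] = [set cyc [tuple Ev1; E1]; cyc [tuple Ev1; E1b]].
Proof.
apply/setP => c; rewrite !inE; apply/andP/orP => [[/imsetP[p]] | ].
  rewrite inE => closed_p ->; rewrite newprime_cyc //.
  case/tupleP: p closed_p => a p; case/tupleP: p => b p; rewrite tuple0.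
  case: a; case: b; rewrite /closedp /= ?mem_seq1 ?edge_eqE //= => _ _;
    [left; rewrite cyc_swap | right; rewrite cyc_swap | left | right];
    by apply/eqP; congr cyc; apply/val_inj.
by case=> /eqP ->; rewrite newprime_cyc //= ?mem_seq1 ?edge_eqE //; split => //;
  apply/imsetP; [exists [tuple Ev1; E1] | exists [tuple Ev1; E1b]]; rewrite ?inE.
Qed.

Section NewPrimeSums.
Variable V : nmodType.

Lemma sum_newprime_cond L (P : pred {set L.-tuple edge}) (F : {set L.-tuple edge} -> V) :
  \sum_(c in cycles L | newprime c && P c) F c =
  \sum_(c in [set c in cycles L | newprime c]) (if P c then F c else 0).
Proof. by rewrite -big_mkcondr; apply: eq_bigl => c; rewrite inE andbA. Qed.

Lemma sum_newprime L (F : {set L.-tuple edge} -> V) :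
  \sum_(c in cycles L | newprime c) F c = \sum_(c in [set c in cycles L | newprime c]) F c.
Proof. by apply: eq_bigl => c; rewrite inE. Qed.

Lemma sum_newprime_cycles1 (F : {set 1.-tuple edge} -> V) :
  \sum_(c in [set c in cycles 1 | newprime c]) F c = F (cyc [tuple Ev1]) + F (cyc [tuple Ev2]).
Proof.
rewrite newprime_cycles1 big_setU1 ?big_set1 // finset.in_set1 !cyc1 (inj_eq set1_inj).
by rewrite -val_eqE /= eqseq_cons edge_eqE.
Qed.

Lemma sum_newprime_cycles2 (F : {set 2.-tuple edge} -> V) :
  \sum_(c in [set c in cycles 2 | newprime c]) F c =
  F (cyc [tuple Ev1; E1]) + F (cyc [tuple Ev1; E1b]).
Proof.
rewrite newprime_cycles2 big_setU1 ?big_set1 // finset.in_set1.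
apply/eqP => /setP/(_ [tuple Ev1; E1]); rewrite !cyc2 !inE eqxx.
by rewrite -!val_eqE /= !eqseq_cons !edge_eqE.
Qed.
End NewPrimeSums.

Lemma big_nat_12_cond (V : nmodType) (P : pred nat) (F : nat -> V) :
  \sum_(1 <= i < 3 | P i) F i = (if P 1%N then F 1%N else 0) + (if P 2%N then F 2%N else 0).
Proof. by rewrite big_mkcond big_ltn // big_nat1. Qed.

Section Invariants.
Variable R : realType.
Implicit Types P Q : potential R.

Lemma Inm1 m Q : Inm 1 m Q = (if 0 == m then Q v1 + Q v2 else 0).
Proof.
rewrite /Inm big_nat1 big_mkcond big_nat1 /= sum_newprime_cond sum_newprime_cycles1.
rewrite !pindex_crep !pweight_crep /pindex /pweight !big_cons !big_nil /=.
rewrite addr0 mulr0 invr1 !mul1r !mulr1 !expr1.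
by case: (0 == m); rewrite ?addr0.
Qed.

Lemma Inm2 m Q : Inm 2 m Q =
  (if 1 == m then Q v1 else 0) + (if -1 == m then Q v1 else 0) +
  (if 0 == m then 2^-1 * (Q v1 ^+ 2 + Q v2 ^+ 2) else 0).
Proof.
rewrite /Inm big_ltn // big_nat1 !big_nat_12_cond /=.
rewrite !sum_newprime_cond sum_newprime_cycles1 sum_newprime_cycles2.
rewrite !pindex_crep !pweight_crep /pindex /pweight !big_cons !big_nil /=.
rewrite !(add0r, addr0, mulr0, mul1r, mulr1, invr1, expr1).
by case: (0 == m); rewrite ?mulrDr ?addr0.
Qed.

Lemma In1 Q : In 1 Q = Q v1 + Q v2.
Proof.
rewrite /In big_nat1 big_mkcond big_nat1 /= sum_newprime sum_newprime_cycles1.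
by rewrite !pweight_crep /pweight !big_cons !big_nil /= invr1 !mul1r !mulr1 !expr1.
Qed.

Lemma In2 Q : In 2 Q = 2^-1 * (Q v1 ^+ 2 + Q v2 ^+ 2) + 2 * Q v1.
Proof.
rewrite /In big_ltn // big_nat1 !big_nat_12_cond /=.
rewrite !sum_newprime sum_newprime_cycles1 sum_newprime_cycles2.
rewrite !pweight_crep /pweight !big_cons !big_nil /=.
rewrite !(add0r, addr0, mul1r, mulr1, invr1, expr1).
ring.
Qed.
Lemma floquet_invariants Q :
  [/\ Inm 1 0 Q = Q v1 + Q v2, Inm 2 0 Q = 2^-1 * (Q v1 ^+ 2 + Q v2 ^+ 2),
       Inm 2 1 Q = Q v1 & Inm 2 (-1) Q = Q v1].
Proof. by rewrite Inm1 !Inm2 /= !(add0r, addr0). Qed.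

Lemma In2_sum_prod Q :
  In 2 Q = 2^-1 * (Q v1 + Q v2) ^+ 2 + 2 * (Q v1 + Q v2) - (2 + Q v1) * Q v2.
Proof. by rewrite In2; field. Qed.

Lemma floquet_invariants_complete P Q :
  same_floquet_spectrum P Q <->
  [/\ Inm 1 0 P = Inm 1 0 Q, Inm 2 0 P = Inm 2 0 Q,
       Inm 2 1 P = Inm 2 1 Q & Inm 2 (-1) P = Inm 2 (-1) Q].
Proof.
apply: (iff_trans (same_floquet_spectrumE P Q)).
have [-> -> -> ->] := floquet_invariants P; have [-> -> -> ->] := floquet_invariants Q.
split=> [[-> ->] // | [sum_eq _ eq1 _]].
by split=> //; apply: (addrI (P v1)); rewrite {2}eq1.
Qed.

Lemma periodic_invariants_complete P Q :
  same_periodic_spectrum P Q <-> In 1 P = In 1 Q /\ In 2 P = In 2 Q.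
Proof.
apply: (iff_trans (same_periodic_spectrumE P Q)).
rewrite !In2_sum_prod !In1; split=> [[-> ->] // | [sum_eq]].
by rewrite sum_eq => /addrI /oppr_inj.
Qed.

Lemma same_periodic_spectrum_cases P Q :
  same_periodic_spectrum P Q ->
  (P v1 = Q v1 /\ P v2 = Q v2) \/ (P v1 = Q v2 - 2 /\ P v2 = Q v1 + 2).
Proof.
move/same_periodic_spectrumE => [sum_eq prod_eq].
have P2E : P v2 = Q v1 + Q v2 - P v1 by rewrite -sum_eq; ring.
have : (P v1 - Q v1) * (Q v2 - 2 - P v1) = (2 + P v1) * P v2 - (2 + Q v1) * Q v2.
  by rewrite P2E; ring.
rewrite prod_eq subrr => /eqP; rewrite mulf_eq0 !subr_eq0 => /orP[]/eqP P1E.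
  by left; split=> //; rewrite P2E P1E; ring.
by right; split; [rewrite -P1E | rewrite P2E -P1E]; ring.
Qed.
End Invariants.

Theorem mainTheorem7 (R : realType) (Q : potential R) :
  (Inm 1 0 Q = Q v1 + Q v2 /\
   Inm 2 0 Q = 2^-1 * (Q v1 ^+ 2 + Q v2 ^+ 2) /\
   Inm 2 1 Q = Q v1 /\ Inm 2 (-1) Q = Q v1 /\
   (forall P : potential R,
      same_floquet_spectrum P Q <->
      [/\ Inm 1 0 P = Inm 1 0 Q, Inm 2 0 P = Inm 2 0 Q,
          Inm 2 1 P = Inm 2 1 Q & Inm 2 (-1) P = Inm 2 (-1) Q])) /\
  (In 1 Q = Q v1 + Q v2 /\
   In 2 Q = 2^-1 * (Q v1 ^+ 2 + Q v2 ^+ 2) + 2 * Q v1 /\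
   (forall P : potential R,
      same_periodic_spectrum P Q <-> (In 1 P = In 1 Q /\ In 2 P = In 2 Q))) /\
  (forall P : potential R, same_periodic_spectrum P Q ->
     (P v1 = Q v1 /\ P v2 = Q v2) \/
     (P v1 = Q v2 - 2 /\ P v2 = Q v1 + 2)) /\
  (Q v1 = 0 /\ Q v2 = 0 ->
   forall P : potential R, same_periodic_spectrum P Q ->
     (P v1 = 0 /\ P v2 = 0) \/ (P v1 = -2 /\ P v2 = 2)) /\
  (Q v1 = -3 /\ Q v2 = -1 ->
   forall P : potential R, same_periodic_spectrum P Q ->
     P v1 = -3 /\ P v2 = -1).
Proof.
have [I10 I20 I21 I2N1] := floquet_invariants Q.
split.
  split; [|split; [|split; [|split]]]; [exact: I10 | exact: I20 | exact: I21 | exact: I2N1 |].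
  by move=> P; apply: floquet_invariants_complete.
split.
  split; [exact: In1 | split; [exact: In2 | move=> P; apply: periodic_invariants_complete]].
split; first by move=> P; apply: same_periodic_spectrum_cases.
split=> -[Q1 Q2] P /same_periodic_spectrum_cases; rewrite Q1 Q2 => -[[-> ->] | [-> ->]].
- by left.
- by right; rewrite sub0r add0r.
- by [].
- by split; ring.
Qed.
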